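(* In $\mathbb{C}\mathbb{P}^2$ with homogeneous coordinates $[x:y:z]$ let $\mathcal{A}$ be the arrangement of the lines $L_1: 2y-z=0$, $L_2: x-y=0$, $L_3: x+y-z=0$, $L_4: x=0$, $L_5: 2x-2y+z=0$, $L_6: x-z=0$, $L_7: 2x+6y-5z=0$, $L_8: y=0$, $L_9: y-z=0$, $L_{10}: z=0$, and consider $L^1_{11}: 3x+2y-3z=0$, $L^1_{12}: 5y-3z=0$, $L^1_{13}: 6x-2y-3z=0$, $L^2_{11}: x-3y-z=0$, $L^2_{12}: 2y+z=0$, $L^2_{13}: 4x+6y-13z=0$. Then $\mathcal{A}\cup\{L^1_{11},L^1_{12},L^1_{13}\}$ and $\mathcal{A}\cup\{L^2_{11},L^2_{12},L^2_{13}\}$ form a rational pair.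
   Context: A line arrangement is a finite set of distinct lines in $\mathbb{C}\mathbb{P}^2$. Its combinatorics is the pair $(\mathcal{A},\mathrm{sing}(\mathcal{A}))$ where each singular point is identified with the set of lines through it. Two arrangements are lattice isomorphic if some bijection between their lines induces a bijection between their sets of singular points. The moduli space $\mathcal{M}(\mathcal{C})$ of a combinatorics $\mathcal{C}$ is the set of arrangements with combinatorics $\mathcal{C}$ modulo $\mathrm{PGL}_3(\mathbb{C})$. A pair of arrangements means two lattice isomorphic arrangements lying in different connected components of their common moduli space. The definition field $\mathbb{F}(\mathcal{A})$ is the number field generated by the coefficients of the lines of $\mathcal{A}$. A pair is rational if both arrangements have definition field $\mathbb{Q}$. *)

From HB Require Import structures.
From mathcomp Require Import all_boot all_order all_algebra all_fingroup.
From mathcomp Require Import complex.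
From mathcomp Require Import all_classical all_reals all_analysis.
Import numFieldTopology.Exports numFieldNormedType.Exports.
Import GRing.Theory Num.Theory.

Set Implicit Arguments.
Unset Strict Implicit.
Unset Printing Implicit Defensive.

Local Open Scope classical_set_scope.
Local Open Scope ring_scope.

(* The usual (metric) topology on the complex numbers R[i] = complex R,
   i.e. the topology of the modulus |a + ib| = sqrt(a^2+b^2). *)
HB.instance Definition _ (R : rcfType) :=
  PseudoPointedMetric.copy (complex R) (complex R)^o.

Section Arrangements.
Variables (R : realType) (n : nat).
Local Notation C := (R[i]).

(* An ordered family of n lines of CP^2 is encoded by an n x 3 complex matrix:
   row i = (a,b,c) is a coefficient vector of the i-th line  a x + b y + c z = 0.
   Projective points are nonzero column vectors p = (x,y,z)^T. *)
Definition lines := 'M[C]_(n, 3).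

Definition incident (A : lines) (i : 'I_n) (p : 'cV[C]_3) : bool :=
  (A *m p) i 0 == 0.

Definition is_arrangement (A : lines) : Prop :=
  (forall i, row i A != 0) /\
  (forall i j, i != j -> forall c : C, row j A != c *: row i A).

(* Singular points of A, each identified with the set of lines through it:
   S belongs to sing A iff S (of size >= 2) is the set of all lines through
   some point p of CP^2. *)
Definition sing (A : lines) (S : {set 'I_n}) : Prop :=
  (2 <= #|S|)%N /\
  exists p : 'cV[C]_3, p != 0 /\ S = finset (fun i => incident A i p).

Definition lattice_iso (A B : lines) : Prop :=
  exists s : {perm 'I_n}, forall S : {set 'I_n}, sing A S <-> sing B (s @: S).

(* Two matrices represent the same arrangement up to PGL_3(C): up to reordering
   the lines, rescaling each coefficient vector, and a projective change of
   coordinates (acting on coefficient vectors by an invertible matrix). *)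
Definition proj_equiv (A B : lines) : Prop :=
  exists (s : {perm 'I_n}) (lam : 'I_n -> C) (M : 'M[C]_3),
    M \in unitmx /\ (forall i, lam i != 0) /\
    forall i, row i B = lam i *: (row (s i) A *m M).

(* The realization space of the combinatorics of A0: all arrangements lattice
   isomorphic to A0 (with the subspace topology of 'M[C]_(n,3)).
   The moduli space M(C) is its quotient by proj_equiv. *)
Definition realization (A0 : lines) : set lines :=
  [set A | is_arrangement A /\ lattice_iso A A0].

(* Subsets of the realization space that are unions of proj_equiv classes,
   i.e. preimages of subsets of the moduli space. *)
Definition saturated (A0 : lines) (U : set lines) : Prop :=
  U `<=` realization A0 /\
  forall A B, realization A0 A -> realization A0 B -> proj_equiv A B ->
    U A -> U B.

(* Open sets of the moduli space, in the quotient topology: subsets whose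
   preimage is open in the (subspace topology of the) realization space. *)
Definition moduli_open (A0 : lines) (U : set lines) : Prop :=
  saturated A0 U /\
  exists O : set lines, open O /\ U = realization A0 `&` O.

(* A (preimage of a) subset K of the moduli space is connected, for the
   quotient topology: it cannot be split by two open sets of the moduli space. *)
Definition moduli_connected (A0 : lines) (K : set lines) : Prop :=
  saturated A0 K /\
  forall U V, moduli_open A0 U -> moduli_open A0 V ->
    K `<=` U `|` V -> K `&` U !=set0 -> K `&` V !=set0 ->
    K `&` U `&` V !=set0.

Definition same_moduli_component (A0 A B : lines) : Prop :=
  exists K, moduli_connected A0 K /\ K A /\ K B.

Definition is_pair (A B : lines) : Prop :=
  is_arrangement A /\ is_arrangement B /\ lattice_iso A B /\
  ~ same_moduli_component A A B.

(* The definition field of A is Q: every line admits a coefficient vector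
   with rational coefficients (equivalently, the field generated by the
   normalized coefficients of the lines is Q). *)
Definition defined_over_Q (A : lines) : Prop :=
  forall i, exists (lam : C) (q : 'rV[rat]_3),
    lam != 0 /\ row i A = lam *: map_mx (fun x : rat => ratr x) q.

Definition is_rational_pair (A B : lines) : Prop :=
  is_pair A B /\ defined_over_Q A /\ defined_over_Q B.

End Arrangements.

Definition mx_of_table (R : realType) (n : nat) (t : seq (seq int)) :
  'M[R[i]]_(n, 3) :=
  \matrix_(i < n, j < 3) ((nth 0 (nth [::] t i) j)%:~R).

(* Coefficients (a,b,c) of a x + b y + c z = 0. *)
Definition A_table : seq (seq int) :=
  [:: [:: 0; 2; -1];
      [:: 1; -1; 0];
      [:: 1; 1; -1];
      [:: 1; 0; 0];
      [:: 2; -2; 1];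
      [:: 1; 0; -1];
      [:: 2; 6; -5];
      [:: 0; 1; 0];
      [:: 0; 1; -1];
      [:: 0; 0; 1]].

Definition A1_table : seq (seq int) :=
  A_table ++
  [:: [:: 3; 2; -3];
      [:: 0; 5; -3];
      [:: 6; -2; -3]].

Definition A2_table : seq (seq int) :=
  A_table ++
  [:: [:: 1; -3; -1];
      [:: 0; 2; 1];
      [:: 4; 6; -13]].

Definition arrA1 (R : realType) : 'M[R[i]]_(13, 3) := mx_of_table R 13 A1_table.
Definition arrA2 (R : realType) : 'M[R[i]]_(13, 3) := mx_of_table R 13 A2_table.

From HB Require Import structures.
From mathcomp Require Import all_boot all_order all_algebra all_fingroup.
From mathcomp Require Import complex.
From mathcomp Require Import all_classical all_reals all_analysis.
From mathcomp Require Import ring.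
Import numFieldTopology.Exports numFieldNormedType.Exports.
Import GRing.Theory Num.Theory.

Set Implicit Arguments.
Unset Strict Implicit.
Unset Printing Implicit Defensive.

Local Open Scope classical_set_scope.
Local Open Scope ring_scope.

(* Both arrangements realize the combinatorics given by the concurrent triples of
   lines of A1, and an exhaustive search shows that this combinatorics has no
   nontrivial automorphism, so the lines of any realization carry a unique
   labelling.  Once lines 3, 7, 9, 2 are moved to x = 0, y = 0, z = 0 and
   x + y - z = 0, the concurrences force lines 0, ..., 9 to be those of A (two
   known intersection points determine each of them), and then force line
   11 = (x, y, z) to satisfy (5z + 3y)(2z - y) = 0.  Invariantly, writing [ijk]
   for the determinant of lines i, j, k, the cross-ratio
   t = [3 7 11][3 2 9] / ([3 11 9][3 7 2]) only takes the values 3/5 (at A1)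
   and -1/2 (at A2).  The loci t <> -1/2 and t <> 3/5 are open, PGL_3-invariant,
   disjoint and cover the realization space, so they separate A1 from A2 in the
   moduli space.  Lines are numbered from 0: line i is L_(i+1) of the statement. *)

(** * Coefficient triples *)

Definition det3 (K : pzRingType) (a b c : K * K * K) : K :=
  let: (a0, a1, a2) := a in let: (b0, b1, b2) := b in let: (c0, c1, c2) := c in
  a0 * (b1 * c2 - b2 * c1) - a1 * (b0 * c2 - b2 * c0) + a2 * (b0 * c1 - b1 * c0).

Definition dot3 (K : pzRingType) (a p : K * K * K) : K :=
  a.1.1 * p.1.1 + a.1.2 * p.1.2 + a.2 * p.2.

Definition cross3 (K : pzRingType) (a b : K * K * K) : K * K * K :=
  (a.1.2 * b.2 - a.2 * b.1.2, a.2 * b.1.1 - a.1.1 * b.2, a.1.1 * b.1.2 - a.1.2 * b.1.1).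

Definition scale3 (K : pzRingType) (l : K) (a : K * K * K) : K * K * K :=
  (l * a.1.1, l * a.1.2, l * a.2).

Definition map3 (K L : Type) (f : K -> L) (a : K * K * K) : L * L * L :=
  (f a.1.1, f a.1.2, f a.2).

Lemma det3_map (K L : comPzRingType) (f : {rmorphism K -> L}) (a b c : K * K * K) :
  det3 (map3 f a) (map3 f b) (map3 f c) = f (det3 a b c).
Proof.
case: a => [[? ?] ?]; case: b => [[? ?] ?]; case: c => [[? ?] ?].
by rewrite /det3 /map3 /= !(rmorphB, rmorphD, rmorphM).
Qed.

Lemma cross3_map (K L : pzRingType) (f : {rmorphism K -> L}) (a b : K * K * K) :
  cross3 (map3 f a) (map3 f b) = map3 f (cross3 a b).
Proof. by rewrite /cross3 /map3 /= !rmorphB !rmorphM. Qed.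

Section TripleAlgebra.
Variable K : fieldType.
Implicit Types (a b c p x : K * K * K) (l m k : K).

Lemma det3_cross a b x : det3 a b x = dot3 x (cross3 a b).
Proof.
case: a => [[? ?] ?]; case: b => [[? ?] ?]; case: x => [[? ?] ?].
by rewrite /det3 /dot3 /cross3 /=; ring.
Qed.

Lemma det3_scale l m k a b c :
  det3 (scale3 l a) (scale3 m b) (scale3 k c) = l * m * k * det3 a b c.
Proof.
case: a => [[? ?] ?]; case: b => [[? ?] ?]; case: c => [[? ?] ?].
by rewrite /det3 /scale3 /=; ring.
Qed.

Lemma det3_rep12 a c : det3 a a c = 0.
Proof. by case: a => [[? ?] ?]; case: c => [[? ?] ?]; rewrite /det3; ring. Qed.

Lemma det3_rep13 a b : det3 a b a = 0.
Proof. by case: a => [[? ?] ?]; case: b => [[? ?] ?]; rewrite /det3; ring. Qed.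

Lemma det3_rep23 a b : det3 a b b = 0.
Proof. by case: a => [[? ?] ?]; case: b => [[? ?] ?]; rewrite /det3; ring. Qed.

Lemma triple_neq0P a :
  reflect [\/ a.1.1 != 0, a.1.2 != 0 | a.2 != 0] (a != (0, 0, 0)).
Proof.
case: a => [[a0 a1] a2] /=; rewrite !xpair_eqE negb_and negb_and -orbA.
by apply: (iffP or3P).
Qed.

Lemma scale3_eq0 l p : p != (0, 0, 0) -> scale3 l p = (0, 0, 0) -> l = 0.
Proof.
move=> /triple_neq0P hp [/eqP h0 /eqP h1 /eqP h2]; apply/eqP.
by case: hp => /negPf hp; [move: h0 | move: h1 | move: h2]; rewrite mulf_eq0 hp orbF.
Qed.

Lemma scale3_det3 a b c p :
  scale3 (det3 a b c) p =
  (dot3 a p * (cross3 b c).1.1 + dot3 b p * (cross3 c a).1.1 + dot3 c p * (cross3 a b).1.1,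
   dot3 a p * (cross3 b c).1.2 + dot3 b p * (cross3 c a).1.2 + dot3 c p * (cross3 a b).1.2,
   dot3 a p * (cross3 b c).2 + dot3 b p * (cross3 c a).2 + dot3 c p * (cross3 a b).2).
Proof.
case: a => [[? ?] ?]; case: b => [[? ?] ?]; case: c => [[? ?] ?]; case: p => [[? ?] ?].
by rewrite /scale3 /det3 /dot3 /cross3 /=; congr (_, _, _); ring.
Qed.

Lemma det3_eq0_common_point a b c p : p != (0, 0, 0) ->
  dot3 a p = 0 -> dot3 b p = 0 -> dot3 c p = 0 -> det3 a b c = 0.
Proof.
move=> hp ha hb hc; apply: (scale3_eq0 hp).
by rewrite scale3_det3 ha hb hc !mul0r !addr0.
Qed.

Lemma dot3_eq0_through a b x p : cross3 a b != (0, 0, 0) ->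
  dot3 a p = 0 -> dot3 b p = 0 -> det3 a b x = 0 -> dot3 x p = 0.
Proof.
move=> hab ha hb hx; apply: (scale3_eq0 hab).
have := scale3_det3 a b x p; rewrite hx ha hb !mul0r !add0r /scale3 !mul0r.
by case=> -> -> ->.
Qed.

Lemma cross3_eq0 a b : a != (0, 0, 0) -> cross3 a b = (0, 0, 0) ->
  exists l, b = scale3 l a.
Proof.
case: a => [[a0 a1] a2]; case: b => [[b0 b1] b2] /triple_neq0P /=.
rewrite /cross3 /scale3 /= => ha [/eqP e0 /eqP e1 /eqP e2].
move: e0 e1 e2; rewrite !subr_eq0 => /eqP e0 /eqP e1 /eqP e2.
case: ha => h.
- exists (b0 / a0); congr (_, _, _); first by field.
  + by apply: (mulfI h); rewrite e2; field.
  + by apply: (mulfI h); rewrite -e1; field.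
- exists (b1 / a1); congr (_, _, _).
  + by apply: (mulfI h); rewrite -e2; field.
  + by field.
  + by apply: (mulfI h); rewrite e0; field.
- exists (b2 / a2); congr (_, _, _).
  + by apply: (mulfI h); rewrite e1; field.
  + by apply: (mulfI h); rewrite -e0; field.
  + by field.
Qed.

Lemma cross3_cross3 p q x :
  cross3 (cross3 p q) x =
  (dot3 x p * q.1.1 - dot3 x q * p.1.1, dot3 x p * q.1.2 - dot3 x q * p.1.2,
   dot3 x p * q.2 - dot3 x q * p.2).
Proof.
case: p => [[? ?] ?]; case: q => [[? ?] ?]; case: x => [[? ?] ?].
by rewrite /dot3 /cross3 /=; congr (_, _, _); ring.
Qed.

Lemma collinear_cross3 p q x : cross3 p q != (0, 0, 0) ->
  dot3 x p = 0 -> dot3 x q = 0 -> exists l, x = scale3 l (cross3 p q).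
Proof.
move=> hpq hp hq; apply: (cross3_eq0 hpq).
by rewrite cross3_cross3 hp hq !mul0r subr0.
Qed.

Definition proportional a b := exists2 l, l != 0 & a = scale3 l b.

Lemma proportional_refl a : proportional a a.
Proof. by exists 1; rewrite ?oner_eq0 // /scale3 !mul1r; case: a => [[]]. Qed.

Lemma det3_proportional a a' b b' c c' :
  proportional a a' -> proportional b b' -> proportional c c' ->
  (det3 a b c == 0) = (det3 a' b' c' == 0).
Proof.
move=> [l hl ->] [m hm ->] [k hk ->].
by rewrite det3_scale !mulf_eq0 (negPf hl) (negPf hm) (negPf hk).
Qed.

Lemma proportional_through p q x y : cross3 p q != (0, 0, 0) ->
  x != (0, 0, 0) -> y != (0, 0, 0) ->
  dot3 x p = 0 -> dot3 x q = 0 -> dot3 y p = 0 -> dot3 y q = 0 ->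
  proportional x y.
Proof.
move=> hpq hx hy hxp hxq hyp hyq.
have [l xE] := collinear_cross3 hpq hxp hxq.
have [m yE] := collinear_cross3 hpq hyp hyq.
have scale0 (k : K) : k = 0 -> scale3 k (cross3 p q) = (0, 0, 0).
  by move=> ->; rewrite /scale3 !mul0r.
have hm : m != 0 by apply: contra_neq hy => /scale0; rewrite yE.
exists (l / m).
  by rewrite mulf_neq0 ?invr_eq0 //; apply: contra_neq hx => /scale0; rewrite xE.
rewrite xE yE /scale3 /=; congr (_, _, _); by rewrite mulrA divfK.
Qed.

Section Frame.
Variables p q r u : K * K * K.
Hypotheses (uqr : det3 u q r != 0) (pur : det3 p u r != 0) (pqu : det3 p q u != 0).

(* The projective coordinate change sending the lines p, q, r to the coordinate
   lines x = 0, y = 0, z = 0 and u to x + y - z = 0. *)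
Definition frame_coords x : K * K * K :=
  (det3 x q r / det3 u q r, det3 p x r / det3 p u r, - det3 p q x / det3 p q u).

Lemma det3_frame_coords a b c :
  det3 (frame_coords a) (frame_coords b) (frame_coords c) =
  - det3 p q r ^+ 2 / (det3 u q r * det3 p u r * det3 p q u) * det3 a b c.
Proof.
move: uqr pur pqu; rewrite /frame_coords.
case: p q r u a b c => [[? ?] ?] [[? ?] ?] [[? ?] ?] [[? ?] ?] [[? ?] ?] [[? ?] ?] [[? ?] ?].
by rewrite /det3 => h1 h2 h3; field; rewrite h1 h2 h3.
Qed.

Lemma frame_coords_frame :
  [/\ frame_coords p = (det3 p q r / det3 u q r, 0, 0),
      frame_coords q = (0, det3 p q r / det3 p u r, 0),
      frame_coords r = (0, 0, - (det3 p q r / det3 p q u))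
    & frame_coords u = (1, 1, -1)].
Proof.
rewrite /frame_coords !det3_rep12 !det3_rep13 !det3_rep23.
by rewrite !mul0r oppr0 mul0r !mulNr !divff.
Qed.

End Frame.
End TripleAlgebra.

(** * Arrangements as matrices *)

Local Notation i0 := (@Ordinal 3 0 isT).
Local Notation i1 := (@Ordinal 3 1 isT).
Local Notation i2 := (@Ordinal 3 2 isT).

Lemma big_ord3 (K : nmodType) (f : 'I_3 -> K) : \sum_l f l = f i0 + f i1 + f i2.
Proof.
rewrite !big_ord_recl big_ord0 addr0 addrA.
by congr (f _ + f _ + f _); apply/val_inj.
Qed.

Lemma ord3P (l : 'I_3) : [\/ l = i0, l = i1 | l = i2].
Proof.
case: l => [[|[|[|m]]] h] //.
- by apply: Or31; apply/val_inj.
- by apply: Or32; apply/val_inj.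
- by apply: Or33; apply/val_inj.
Qed.

Section LineMatrices.
Variables (R : realType) (n : nat).
Local Notation C := R[i].
Implicit Types (A B : lines R n) (i j k : 'I_n) (S : {set 'I_n}).

Definition line A i : C * C * C := (A i i0, A i i1, A i i2).

Definition det_rows A i j k : C := det3 (line A i) (line A j) (line A k).

Definition pencil A i j : {set 'I_n} := [set k | det_rows A i j k == 0]%SET.

Definition point (p : 'cV[C]_3) : C * C * C := (p i0 0, p i1 0, p i2 0).

Definition col3 (t : C * C * C) : 'cV[C]_3 := \col_l [:: t.1.1; t.1.2; t.2]`_l.

Lemma incidentE A i p : incident A i p = (dot3 (line A i) (point p) == 0).
Proof. by rewrite /incident mxE big_ord3. Qed.

Lemma point_neq0 p : p != 0 -> point p != (0, 0, 0).
Proof.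
apply: contra_neq => -[h0 h1 h2]; apply/colP => l; rewrite mxE.
by case: (ord3P l) => ->.
Qed.

Lemma col3K : cancel col3 point.
Proof. by case=> [[a b] c]; rewrite /point /col3 !mxE. Qed.

Lemma col3_neq0 t : t != (0, 0, 0) -> col3 t != 0.
Proof. by apply: contra_neq => h; rewrite -(col3K t) h /point !mxE. Qed.

Lemma line_neq0 A i : row i A != 0 -> line A i != (0, 0, 0).
Proof.
apply: contra_neq => -[h0 h1 h2]; apply/rowP => l; rewrite !mxE.
by case: (ord3P l) => ->.
Qed.

Lemma line_scale A i j (c : C) :
  row j A = c *: row i A -> line A j = scale3 c (line A i).
Proof.
move=> h; have e l : A j l = c * A i l by have /rowP/(_ l) := h; rewrite !mxE.
by rewrite /line /scale3 !e.
Qed.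

Lemma cross_lines_neq0 A i j : is_arrangement A -> i != j ->
  cross3 (line A i) (line A j) != (0, 0, 0).
Proof.
move=> [hnz hd] hij; apply/eqP => /(cross3_eq0 (line_neq0 (hnz i))) [c hc].
move/eqP: (hd i j hij c); apply; apply/rowP => l; rewrite !mxE.
by move: hc; rewrite /line /scale3 /= => -[h0 h1 h2]; case: (ord3P l) => ->.
Qed.

Lemma det_rows_concurrent A S p i j k : p != 0 ->
  S = finset (fun l => incident A l p) -> i \in S -> j \in S -> k \in S ->
  det_rows A i j k = 0.
Proof.
move=> hp ->; rewrite !inE !incidentE => /eqP hi /eqP hj /eqP hk.
exact: det3_eq0_common_point (point_neq0 hp) hi hj hk.
Qed.

Lemma sing_pencil A S : is_arrangement A ->
  sing A S <-> exists i j, i != j /\ S = pencil A i j.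
Proof.
move=> hA; split.
  move=> [/card_gt1P [i [j [hi hj hij]]] [p [hp hS]]].
  exists i, j; split => //; apply/setP => k; rewrite inE.
  apply/idP/eqP => [hk|]; first exact: det_rows_concurrent hp hS hi hj hk.
  move: hi hj; rewrite hS !inE !incidentE => /eqP hi /eqP hj hk.
  exact/eqP/(dot3_eq0_through (cross_lines_neq0 hA hij) hi hj).
move=> [i [j [hij ->]]]; split.
  apply/card_gt1P; exists i, j.
  by rewrite !inE /det_rows det3_rep13 det3_rep23 eqxx.
exists (col3 (cross3 (line A i) (line A j))); split.
  exact/col3_neq0/cross_lines_neq0.
by apply/setP => k; rewrite !inE incidentE col3K /det_rows det3_cross.
Qed.

Lemma det_rows_eq0_sing A B (s : 'I_n -> 'I_n) : is_arrangement A ->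
  (forall S, sing A S -> sing B (s @: S)) ->
  forall i j k, det_rows A i j k = 0 -> det_rows B (s i) (s j) (s k) = 0.
Proof.
move=> hA hAB i j k hk.
have [<-|hij] := eqVneq i j; first by rewrite /det_rows det3_rep12.
have hS : sing A (pencil A i j) by apply/sing_pencil => //; exists i, j.
have [_ [p [hp hpS]]] := hAB _ hS.
apply: (det_rows_concurrent hp hpS); apply: imset_f; rewrite inE.
- by rewrite /det_rows det3_rep13.
- by rewrite /det_rows det3_rep23.
- by rewrite hk.
Qed.

Lemma lattice_iso_det_rows A B (s : {perm 'I_n}) :
  is_arrangement A -> is_arrangement B ->
  (forall S, sing A S <-> sing B (s @: S)) ->
  forall i j k, (det_rows A i j k == 0) = (det_rows B (s i) (s j) (s k) == 0).
Proof.
move=> hA hB hAB i j k; apply/eqP/eqP; first by apply: det_rows_eq0_sing => // S /hAB.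
have sK S : s @: ((s^-1)%g @: S) = S.
  by rewrite -imset_comp -[RHS]imset_id; apply: eq_imset => x /=; rewrite permKV.
move=> /(det_rows_eq0_sing (s := (s^-1)%g) hB) /=; rewrite !permK; apply.
by move=> S hS; apply/hAB; rewrite sK.
Qed.

Lemma lattice_iso_of_det_rows A B : is_arrangement A -> is_arrangement B ->
  (forall i j k, (det_rows A i j k == 0) = (det_rows B i j k == 0)) ->
  lattice_iso A B.
Proof.
move=> hA hB hAB; exists 1%g => S.
have -> : (1%g : {perm 'I_n}) @: S = S.
  by rewrite -[RHS]imset_id; apply: eq_imset => x; rewrite perm1.
rewrite !sing_pencil //.
have pencilE i j : pencil A i j = pencil B i j by apply/setP => k; rewrite !inE hAB.
by split=> -[i [j [hij ->]]]; exists i, j; rewrite pencilE.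
Qed.

Lemma arrangement_of_det_rows A :
  (forall i, exists j k, det_rows A i j k != 0) ->
  (forall i j, i != j -> exists k, det_rows A i j k != 0) -> is_arrangement A.
Proof.
move=> h1 h2; split.
  move=> i; have [j [k]] := h1 i; apply: contra_neq => hi; rewrite /det_rows.
  have -> : line A i = scale3 0 (line A i) by apply: line_scale; rewrite hi scale0r.
  case: (line A i) (line A j) (line A k) => [[? ?] ?] [[? ?] ?] [[? ?] ?].
  by rewrite /det3 /scale3 /=; ring.
move=> i j hij c; have [k] := h2 i j hij; apply: contra_neq => /line_scale hj.
rewrite /det_rows hj; case: (line A i) (line A k) => [[? ?] ?] [[? ?] ?].
by rewrite /det3 /scale3 /=; ring.
Qed.
End LineMatrices.

Section ProjectiveEquivalence.
Variable R : realType.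
Local Notation C := R[i].

Definition mul3mx (a : C * C * C) (M : 'M[C]_3) : C * C * C :=
  (a.1.1 * M i0 i0 + a.1.2 * M i1 i0 + a.2 * M i2 i0,
   a.1.1 * M i0 i1 + a.1.2 * M i1 i1 + a.2 * M i2 i1,
   a.1.1 * M i0 i2 + a.1.2 * M i1 i2 + a.2 * M i2 i2).

Lemma line_mulmx n (A : lines R n) (M : 'M[C]_3) i :
  line (A *m M) i = mul3mx (line A i) M.
Proof. by rewrite /line /mul3mx !mxE !big_ord3. Qed.

Lemma det3_mul3mx a b c (M : 'M[C]_3) :
  det3 (mul3mx a M) (mul3mx b M) (mul3mx c M) = det3 a b c * det_rows M i0 i1 i2.
Proof.
rewrite /det_rows /line /mul3mx.
case: a b c => [[? ?] ?] [[? ?] ?] [[? ?] ?] /=.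
by rewrite /det3; ring.
Qed.

Lemma det_rows_unitmx (M : 'M[C]_3) : M \in unitmx -> det_rows M i0 i1 i2 != 0.
Proof.
move=> hM; apply/eqP => hM0.
have := congr1 (fun N : 'M[C]_3 => det_rows N i0 i1 i2) (mulmxV hM).
rewrite /= {1}/det_rows !line_mulmx det3_mul3mx -/(det_rows M _ _ _) hM0 mul0r.
rewrite /det_rows /line /det3 !mxE /= !mulr1n !mulr0n => /eqP.
by rewrite !(mul0r, mulr0, mul1r, subr0, addr0) eq_sym oner_eq0.
Qed.

Lemma det_rows_proj n (A B : lines R n) (s : {perm 'I_n}) (lam : 'I_n -> C)
    (M : 'M[C]_3) :
  (forall i, row i B = lam i *: (row (s i) A *m M)) ->
  forall i j k, det_rows B i j k =
    lam i * lam j * lam k * det_rows M i0 i1 i2 * det_rows A (s i) (s j) (s k).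
Proof.
move=> hB i j k.
have lineB l : line B l = scale3 (lam l) (mul3mx (line A (s l)) M).
  have e m : B l m = lam l * (row (s l) A *m M) 0 m by have /rowP/(_ m) := hB l; rewrite !mxE.
  by rewrite /line /scale3 !e !mxE !big_ord3 !mxE.
by rewrite {1}/det_rows !lineB det3_scale det3_mul3mx mulrA -/(det_rows A _ _ _) mulrAC.
Qed.

(* Row k of [relabel s A] is the row of A that s labels k. *)
Definition relabel n (s : {perm 'I_n}) (A : lines R n) : lines R n :=
  \matrix_(k, l) A ((s^-1)%g k) l.

Lemma det_rows_relabel n (s : {perm 'I_n}) (A : lines R n) i j k :
  det_rows (relabel s A) i j k = det_rows A ((s^-1)%g i) ((s^-1)%g j) ((s^-1)%g k).
Proof. by rewrite /det_rows /line !mxE. Qed.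

End ProjectiveEquivalence.

(** * The combinatorics of A1 and A2 *)

Definition table_line (t : seq (seq int)) (i : nat) : int * int * int :=
  (nth 0 (nth [::] t i) 0, nth 0 (nth [::] t i) 1, nth 0 (nth [::] t i) 2).

Definition det_table (t : seq (seq int)) (i j k : nat) : int :=
  det3 (table_line t i) (table_line t j) (table_line t k).

Lemma mem_iota_ord n (i : 'I_n) : (i : nat) \in iota 0 n.
Proof. by rewrite mem_iota ltn_ord. Qed.

Lemma iota_ord n m : m \in iota 0 n -> exists i : 'I_n, m = i.
Proof. by rewrite mem_iota add0n => hm; exists (Ordinal hm). Qed.

Section IntegerTables.
Variables (R : realType) (n : nat) (t : seq (seq int)).

Lemma line_table i : line (mx_of_table R n t) i = map3 intr (table_line t i).
Proof. by rewrite /line /map3 !mxE. Qed.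

Lemma det_rows_table i j k :
  det_rows (mx_of_table R n t) i j k = (det_table t i j k)%:~R.
Proof. by rewrite /det_rows !line_table det3_map. Qed.

Lemma defined_over_Q_table : defined_over_Q (mx_of_table R n t).
Proof.
move=> i; exists 1, (\row_l ((nth 0 (nth [::] t i) l)%:~R : rat)); split.
  exact: oner_neq0.
by apply/rowP => l; rewrite !mxE mul1r ratr_int.
Qed.

Definition table_arrangement : bool :=
  all (fun i => has (fun j => has (fun k => det_table t i j k != 0) (iota 0 n)) (iota 0 n))
      (iota 0 n) &&
  all (fun i => all (fun j => (i == j) || has (fun k => det_table t i j k != 0) (iota 0 n))
                    (iota 0 n))
      (iota 0 n).

Lemma table_arrangementP : table_arrangement ->
  (forall i : 'I_n, exists j k : 'I_n, det_table t i j k != 0) /\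
  (forall i j : 'I_n, i != j -> exists k : 'I_n, det_table t i j k != 0).
Proof.
case/andP => /allP h1 /allP h2; split.
  move=> i; have /hasP [j /iota_ord [j' ->]] := h1 i (mem_iota_ord i).
  by move=> /hasP [k /iota_ord [k' ->] hk]; exists j', k'.
move=> i j hij; have /allP /(_ j (mem_iota_ord j)) := h2 i (mem_iota_ord i).
by rewrite (inj_eq val_inj) (negPf hij) => /hasP [k /iota_ord [k' ->] hk]; exists k'.
Qed.

Lemma arrangement_table : table_arrangement -> is_arrangement (mx_of_table R n t).
Proof.
move=> /table_arrangementP [h1 h2]; apply: arrangement_of_det_rows.
  by move=> i; have [j [k hk]] := h1 i; exists j, k; rewrite det_rows_table intr_eq0.
by move=> i j /h2 [k hk]; exists k; rewrite det_rows_table intr_eq0.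
Qed.

End IntegerTables.

(* Tabulated so that the exhaustive search below evaluates each determinant once. *)
Definition concurrency_table : seq (seq (seq bool)) :=
  [seq [seq [seq det_table A1_table i j k == 0 | k <- iota 0 13] | j <- iota 0 13]
    | i <- iota 0 13].

Definition concurrent (i j k : nat) : bool :=
  nth false (nth [::] (nth [::] concurrency_table i) j) k.

Lemma concurrentE (i j k : 'I_13) : concurrent i j k = (det_table A1_table i j k == 0).
Proof.
by rewrite /concurrent !(nth_map 0) ?size_map ?size_iota ?ltn_ord // !nth_iota ?ltn_ord.
Qed.

Lemma A1_table_arrangement : table_arrangement 13 A1_table.
Proof. by vm_compute. Qed.

Lemma A2_table_arrangement : table_arrangement 13 A2_table.
Proof. by vm_compute. Qed.

Lemma A2_table_concurrent (i j k : 'I_13) :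
  (det_table A2_table i j k == 0) = concurrent i j k.
Proof.
have /allP/(_ i (mem_iota_ord i))/allP/(_ j (mem_iota_ord j))/allP/(_ k (mem_iota_ord k))/eqP // :
  all (fun i => all (fun j => all (fun k =>
    (det_table A2_table i j k == 0) == concurrent i j k) (iota 0 13)) (iota 0 13)) (iota 0 13).
by vm_compute.
Qed.

(* [p] lists the images of the lines 0, ..., size p - 1 under a partial map,
   and [extends p v] says that v may be the image of line size p. *)
Definition extends (p : seq nat) (v : nat) : bool :=
  (v \notin p) &&
  all (fun i => all (fun j => concurrent i j (size p) ==> concurrent (nth 0 p i) (nth 0 p j) v)
                    (iota 0 i))
      (iota 0 (size p)).

(* [rigid_from f p]: every injective, concurrency-preserving extension of [p] to
   all 13 lines is the identity.  The recursive call sits under an [if] rather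
   than an [==>] to keep the search lazy under [vm_compute]. *)
Fixpoint rigid_from (fuel : nat) (p : seq nat) : bool :=
  if fuel is f.+1 then
    if size p == 13 then p == iota 0 13
    else all (fun v => if extends p v then rigid_from f (rcons p v) else true) (iota 0 13)
  else false.

Lemma rigid_from_nil : rigid_from 14 [::].
Proof. by vm_compute. Qed.

Section ConcurrencyAutomorphism.
Variable g : 'I_13 -> 'I_13.
Hypotheses (g_inj : injective g)
  (g_conc : forall i j k : 'I_13, concurrent i j k -> concurrent (g i) (g j) (g k)).

Let img m := [seq (g (inord x) : nat) | x <- iota 0 m].

Let size_img m : size (img m) = m.
Proof. by rewrite size_map size_iota. Qed.

Let nth_img m x : (x < m)%N -> nth 0 (img m) x = g (inord x).
Proof. by move=> hx; rewrite (nth_map 0) ?size_iota // nth_iota. Qed.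

Let img_S m : img m.+1 = rcons (img m) (g (inord m)).
Proof. by rewrite /img -[m.+1]addn1 iotaD map_cat cats1. Qed.

Let extends_img m : (m < 13)%N -> extends (img m) (g (inord m)).
Proof.
move=> hm; apply/andP; split.
  apply/mapP => -[x]; rewrite mem_iota add0n => /andP [_ hx] /val_inj /g_inj /(congr1 val).
  by rewrite /= !inordK ?(ltn_trans hx hm) // => e; rewrite e ltnn in hx.
rewrite size_img; apply/allP => i; rewrite mem_iota add0n => /andP [_ hi].
apply/allP => j; rewrite mem_iota add0n => /andP [_ hj]; apply/implyP.
have hi13 := ltn_trans hi hm; have hj13 := ltn_trans (ltn_trans hj hi) hm.
rewrite !nth_img ?(ltn_trans hj hi) //.
by have := @g_conc (@inord 12 i) (@inord 12 j) (@inord 12 m); rewrite !inordK.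
Qed.

Let rigid_img f m : (m <= 13)%N -> rigid_from f (img m) -> img 13 = iota 0 13.
Proof.
elim: f m => [//|f IH] m hm; cbn [rigid_from]; rewrite size_img.
case: eqP => [-> /eqP //|/eqP ne].
have hm' : (m < 13)%N by rewrite ltn_neqAle ne.
move=> /allP /(_ _ (mem_iota_ord (g (inord m)))).
by rewrite extends_img // -img_S; apply: IH.
Qed.

Lemma concurrent_automorphism_id : g =1 id.
Proof.
move=> i; apply/val_inj.
have := congr1 (nth 0 ^~ i) (@rigid_img 14 0 isT rigid_from_nil).
by rewrite nth_img // nth_iota // inord_val.
Qed.

End ConcurrencyAutomorphism.

(** * Realizations and the cross-ratio *)

Local Notation "''L' k" := (@Ordinal 13 k isT) (at level 0, k at level 0, format "''L' k").

(* The intersection point of lines a, b of A differs from that of lines c, d. *)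
Definition distinct_points (a b c d : nat) : bool :=
  let l := table_line A1_table in cross3 (cross3 (l a) (l b)) (cross3 (l c) (l d)) != (0, 0, 0).

Section Realizations.
Variable K : numFieldType.
Implicit Types u : 'I_13 -> K * K * K.

Definition A_line (i : nat) : K * K * K := map3 intr (table_line A1_table i).

Lemma det3_A_line (i j k : 'I_13) :
  (det3 (A_line i) (A_line j) (A_line k) == 0) = concurrent i j k.
Proof. by rewrite det3_map intr_eq0 concurrentE. Qed.

Lemma distinct_A_points a b c d : distinct_points a b c d ->
  cross3 (cross3 (A_line a) (A_line b)) (cross3 (A_line c) (A_line d)) != (0, 0, 0).
Proof.
rewrite /distinct_points /A_line !cross3_map.
by case: (cross3 (cross3 _ _) _) => [[x y] z]; rewrite /map3 /= !xpair_eqE !intr_eq0.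
Qed.

Definition realizes u := forall i j k : 'I_13, (det3 (u i) (u j) (u k) == 0) = concurrent i j k.

Lemma A_line_realizes : realizes (fun i => A_line i).
Proof. exact: det3_A_line. Qed.

Lemma realizes_neq0 u : realizes u -> forall i, u i != (0, 0, 0).
Proof.
move=> hu i; have [hA _] := table_arrangementP A1_table_arrangement.
have [j [k]] := hA i; rewrite -concurrentE -hu; apply: contra_neq => ->.
by case: (u j) (u k) => [[? ?] ?] [[? ?] ?]; rewrite /det3; ring.
Qed.

Lemma realizes_through u (a b i : 'I_13) : realizes u ->
  proportional (u a) (A_line a) -> proportional (u b) (A_line b) -> concurrent a b i ->
  dot3 (u i) (cross3 (A_line a) (A_line b)) = 0.
Proof.
move=> hu pa pb hi; rewrite -det3_cross; apply/eqP.
by rewrite -(det3_proportional pa pb (proportional_refl (u i))) hu.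
Qed.

(* v, w, z play the lines 10, 11, 12; the other triples are the lines of A. *)
Lemma extension_quadratic (v w z : K * K * K) :
  det3 (1, 0, -1) (0, 1, 0) v = 0 -> det3 (0, 1, 0) (0, 0, 1) w = 0 ->
  det3 (2, -2, 1) (1, 0, -1) z = 0 -> det3 (1, -1, 0) v w = 0 ->
  det3 (0, 2, -1) v z = 0 -> det3 (2, 6, -5) w z = 0 ->
  det3 (1, 0, 0) (0, 1, 0) v != 0 -> det3 (1, 0, 0) (0, 1, 0) z != 0 ->
  (5 * w.2 + 3 * w.1.2) * (2 * w.2 - w.1.2) = 0.
Proof.
case: v w z => [[x0 y0] z0] [[x1 y1] z1] [[x2 y2] z2].
rewrite /det3 => h0 h1 h2 e01 e02 e12 nz0 nz2.
have {nz0} nz0 : z0 != 0 by apply: contra_neq nz0 => ->; ring.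
have {nz2} nz2 : z2 != 0 by apply: contra_neq nz2 => ->; ring.
have ex0 : x0 = - z0 by apply/eqP; rewrite -addr_eq0 -h0; apply/eqP; ring.
have ex1 : x1 = 0 by rewrite -h1; ring.
subst x0 x1.
have E1 : y0 * z1 - z0 * (y1 + z1) = 0 by rewrite -e01; ring.
(* Line z solves three linear equations, so their determinant vanishes. *)
have D : det3 (2, 3, 2) (2 * z0 + y0, z0, 2 * z0) (6 * z1 + 5 * y1, -2 * z1, 2 * y1) = 0.
  apply: (det3_eq0_common_point (p := (x2, y2, z2))); rewrite /dot3 /=.
  - by apply/triple_neq0P; apply: Or33.
  - by rewrite -h2; ring.
  - by rewrite -e02; ring.
  - by rewrite -e12; ring.
have : 2 * z0 * ((5 * z1 + 3 * y1) * (2 * z1 - y1)) =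
    z1 * det3 (2, 3, 2) (2 * z0 + y0, z0, 2 * z0) (6 * z1 + 5 * y1, -2 * z1, 2 * y1) +
    (6 * y1 + 4 * z1) * (y0 * z1 - z0 * (y1 + z1)) by rewrite /det3; ring.
rewrite D E1 !mulr0 addr0 => /eqP.
by rewrite -mulrA mulf_eq0 pnatr_eq0 /= mulf_eq0 (negPf nz0) => /eqP.
Qed.

Lemma realizes_det3 u (a b c : 'I_13) x y z : realizes u ->
  proportional (u a) x -> proportional (u b) y -> proportional (u c) z ->
  (det3 x y z == 0) = concurrent a b c.
Proof. by move=> hu pa pb pc; rewrite -(det3_proportional pa pb pc) hu. Qed.

Lemma A_lineE :
  [/\ A_line 0 = (0, 2, -1), A_line 1 = (1, -1, 0), A_line 2 = (1, 1, -1),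
      A_line 3 = (1, 0, 0) & A_line 4 = (2, -2, 1)] /\
  [/\ A_line 5 = (1, 0, -1), A_line 6 = (2, 6, -5), A_line 7 = (0, 1, 0),
      A_line 8 = (0, 1, -1) & A_line 9 = (0, 0, 1)].
Proof. by rewrite /A_line /map3 /=; split; split; congr (_, _, _); ring. Qed.

Section StandardPosition.
Variable u : 'I_13 -> K * K * K.
Hypotheses (u_realizes : realizes u)
  (u2 : proportional (u 'L2) (1, 1, -1)) (u3 : proportional (u 'L3) (1, 0, 0))
  (u7 : proportional (u 'L7) (0, 1, 0)) (u9 : proportional (u 'L9) (0, 0, 1)).

Let determined (a b c d i : 'I_13) :
  proportional (u a) (A_line a) -> proportional (u b) (A_line b) ->
  proportional (u c) (A_line c) -> proportional (u d) (A_line d) ->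
  concurrent a b i -> concurrent c d i -> distinct_points a b c d ->
  proportional (u i) (A_line i).
Proof.
move=> pa pb pc pd habi hcdi hP.
apply: (proportional_through (distinct_A_points hP)).
- exact: realizes_neq0.
- exact: (realizes_neq0 A_line_realizes).
- exact: realizes_through u_realizes pa pb habi.
- exact: realizes_through u_realizes pc pd hcdi.
- exact: realizes_through A_line_realizes (proportional_refl _) (proportional_refl _) habi.
- exact: realizes_through A_line_realizes (proportional_refl _) (proportional_refl _) hcdi.
Qed.

Lemma standard_rigid (i : 'I_13) : (i <= 9)%N -> proportional (u i) (A_line i).
Proof.
have [[_ _ e2 e3 _] [_ _ e7 _ e9]] := A_lineE.
have p2 : proportional (u 'L2) (A_line 2) by rewrite e2.
have p3 : proportional (u 'L3) (A_line 3) by rewrite e3.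
have p7 : proportional (u 'L7) (A_line 7) by rewrite e7.
have p9 : proportional (u 'L9) (A_line 9) by rewrite e9.
have p8 := determined (i := 'L8) p7 p9 p2 p3 isT isT isT.
have p5 := determined (i := 'L5) p3 p9 p2 p7 isT isT isT.
have p1 := determined (i := 'L1) p3 p7 p5 p8 isT isT isT.
have p0 := determined (i := 'L0) p7 p9 p1 p2 isT isT isT.
have p4 := determined (i := 'L4) p1 p9 p0 p3 isT isT isT.
have p6 := determined (i := 'L6) p2 p4 p0 p5 isT isT isT.
by case: i => [[|[|[|[|[|[|[|[|[|[|m]]]]]]]]]] hm] //= _; rewrite (bool_irrelevance hm isT).
Qed.

Lemma standard_line11 :
  (5 * (u 'L11).2 + 3 * (u 'L11).1.2) * (2 * (u 'L11).2 - (u 'L11).1.2) = 0.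
Proof.
have [[e0 e1 _ e3 e4] [e5 e6 e7 _ e9]] := A_lineE.
have q0 := standard_rigid (i := 'L0) isT; have q1 := standard_rigid (i := 'L1) isT.
have q3 := standard_rigid (i := 'L3) isT; have q4 := standard_rigid (i := 'L4) isT.
have q5 := standard_rigid (i := 'L5) isT; have q6 := standard_rigid (i := 'L6) isT.
have q7 := standard_rigid (i := 'L7) isT; have q9 := standard_rigid (i := 'L9) isT.
rewrite e0 in q0; rewrite e1 in q1; rewrite e3 in q3; rewrite e4 in q4.
rewrite e5 in q5; rewrite e6 in q6; rewrite e7 in q7; rewrite e9 in q9.
have q i := proportional_refl (u i).
apply: (extension_quadratic (v := u 'L10) (z := u 'L12)).
- by apply/eqP; rewrite (realizes_det3 u_realizes q5 q7 (q _)).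
- by apply/eqP; rewrite (realizes_det3 u_realizes q7 q9 (q _)).
- by apply/eqP; rewrite (realizes_det3 u_realizes q4 q5 (q _)).
- by apply/eqP; rewrite (realizes_det3 u_realizes q1 (q _) (q _)).
- by apply/eqP; rewrite (realizes_det3 u_realizes q0 (q _) (q _)).
- by apply/eqP; rewrite (realizes_det3 u_realizes q6 (q _) (q _)).
- by rewrite (realizes_det3 u_realizes q3 q7 (q _)).
- by rewrite (realizes_det3 u_realizes q3 q7 (q _)).
Qed.

End StandardPosition.
End Realizations.

Arguments A_line {K} i.

Section CrossRatio.
Variable K : numFieldType.
Implicit Types u w : 'I_13 -> K * K * K.

(* In a frame where lines 3, 7, 9, 2 are x = 0, y = 0, z = 0, x + y - z = 0,
   cr_num u / cr_den u = - z / y for line 11 = (x, y, z): up to sign it is the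
   cross-ratio of the four points cut out on line 3 by lines 7, 9, 2 and 11. *)
Definition cr_num u : K := det3 (u 'L3) (u 'L7) (u 'L11) * det3 (u 'L3) (u 'L2) (u 'L9).
Definition cr_den u : K := det3 (u 'L3) (u 'L11) (u 'L9) * det3 (u 'L3) (u 'L7) (u 'L2).
Definition cr_comb (a b : K) u : K := a * cr_num u + b * cr_den u.

Lemma cr_comb_scale a b u w (L : 'I_13 -> K) (d : K) :
  (forall i j k, det3 (w i) (w j) (w k) = L i * L j * L k * d * det3 (u i) (u j) (u k)) ->
  cr_comb a b w = L 'L3 ^+ 2 * L 'L7 * L 'L11 * L 'L2 * L 'L9 * d ^+ 2 * cr_comb a b u.
Proof. by move=> h; rewrite /cr_comb /cr_num /cr_den !h; ring. Qed.

Definition nondegenerate u :=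
  forall i j k : 'I_13, ~~ concurrent i j k -> det3 (u i) (u j) (u k) != 0.

Lemma realizes_nondegenerate u : realizes u -> nondegenerate u.
Proof. by move=> hu i j k; rewrite hu. Qed.

Lemma realizes_cr_den u : realizes u -> cr_den u != 0.
Proof. by move=> hu; rewrite /cr_den mulf_neq0 // hu. Qed.

Lemma standard_quadratic u : realizes u ->
  proportional (u 'L2) (1, 1, -1) -> proportional (u 'L3) (1, 0, 0) ->
  proportional (u 'L7) (0, 1, 0) -> proportional (u 'L9) (0, 0, 1) ->
  cr_comb 5 (-3) u * cr_comb 2 1 u = 0.
Proof.
move=> hu p2 p3 p7 p9; move: (standard_line11 hu p2 p3 p7 p9).
rewrite /cr_comb /cr_num /cr_den; move: p2 p3 p7 p9 => [d _ ->] [a _ ->] [b _ ->] [c _ ->].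
case: (u 'L11) => [[x y] z] /= H.
transitivity ((a ^+ 2 * b * c * d) ^+ 2 * ((5 * z + 3 * y) * (2 * z - y))).
  by rewrite /det3 /scale3 /=; ring.
by rewrite H mulr0.
Qed.

Lemma realizes_quadratic u : realizes u -> cr_comb 5 (-3) u * cr_comb 2 1 u = 0.
Proof.
move=> hu; set p := u 'L3; set q := u 'L7; set r := u 'L9; set e := u 'L2.
have [n279 n329 n372 n379] : [/\ det3 e q r != 0, det3 p e r != 0, det3 p q e != 0
                              & det3 p q r != 0] by rewrite !hu.
pose w i := frame_coords p q r e (u i).
pose k := - det3 p q r ^+ 2 / (det3 e q r * det3 p e r * det3 p q e).
have k_neq0 : k != 0 by rewrite mulf_neq0 ?oppr_eq0 ?expf_neq0 ?invr_eq0 ?mulf_neq0.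
have hw i j l : det3 (w i) (w j) (w l) = 1 * 1 * 1 * k * det3 (u i) (u j) (u l).
  by rewrite !mul1r det3_frame_coords.
have w_realizes : realizes w by move=> i j l; rewrite hw !mul1r mulf_eq0 (negPf k_neq0) hu.
have [w3 w7 w9 w2] := frame_coords_frame n279 n329 n372.
have axis (l : K) : l != 0 -> [/\ proportional (l, 0, 0) (1, 0, 0),
    proportional (0, l, 0) (0, 1, 0) & proportional (0, 0, l) (0, 0, 1)].
  by move=> hl; split; exists l; rewrite // /scale3 /= mulr1 mulr0.
have [a _ _] := axis (det3 p q r / det3 e q r) (mulf_neq0 n379 (invr_neq0 n279)).
have [_ b _] := axis (det3 p q r / det3 p e r) (mulf_neq0 n379 (invr_neq0 n329)).
have c_neq0 : - (det3 p q r / det3 p q e) != 0 by rewrite oppr_eq0 mulf_neq0 ?invr_eq0.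
have [_ _ c] := axis _ c_neq0.
have := standard_quadratic w_realizes; rewrite /w w3 w7 w9 w2 !(cr_comb_scale _ _ hw).
move=> /(_ (proportional_refl _) a b c) /eqP.
rewrite (_ : _ * _ = k ^+ 4 * (cr_comb 5 (-3) u * cr_comb 2 1 u)); last by ring.
by rewrite mulf_eq0 expf_eq0 (negPf k_neq0) andbF => /eqP.
Qed.

Lemma realizes_cover u : realizes u -> cr_comb 5 (-3) u != 0 \/ cr_comb 2 1 u != 0.
Proof.
move=> hu; have [h21|h21] := eqVneq (cr_comb 2 1 u) 0; [left | by right].
have hden := realizes_cr_den hu.
have eden : cr_den u = - 2 * cr_num u.
  by apply/eqP; rewrite -subr_eq0 -h21 /cr_comb; apply/eqP; ring.
apply: contra_neq hden => h53.
have : 11 * cr_num u = 0 by rewrite -h53 /cr_comb eden; ring.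
by move/eqP; rewrite mulf_eq0 pnatr_eq0 /= eden => /eqP ->; rewrite mulr0.
Qed.

Lemma nondegenerate_scale u w (L : 'I_13 -> K) (d : K) :
  (forall i, L i != 0) -> d != 0 ->
  (forall i j k, det3 (w i) (w j) (w k) = L i * L j * L k * d * det3 (u i) (u j) (u k)) ->
  nondegenerate u -> nondegenerate w.
Proof. by move=> hL hd h hu i j k /hu hijk; rewrite h !mulf_neq0. Qed.

Lemma realizes_rigid u (t : {perm 'I_13}) : realizes u -> nondegenerate (u \o t) -> t = 1%g.
Proof.
move=> hu ht; have tV_id : (t^-1)%g =1 id.
  apply: concurrent_automorphism_id; first exact: perm_inj.
  move=> i j k hijk; apply: contraLR hijk => /ht /=; rewrite !permKV.
  by rewrite -hu => /negPf ->.
by apply/permP => x; rewrite perm1 -{1}(tV_id x) permKV.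
Qed.

End CrossRatio.

(** * Separating the moduli space *)

Section Components.
Variable R : realType.
Local Notation C := R[i].
Local Notation A1 := (arrA1 R).
Local Notation A2 := (arrA2 R).
Implicit Types (B : lines R 13) (s : {perm 'I_13}).

Definition config s B : 'I_13 -> C * C * C := line (relabel s B).

Lemma det3_config s B i j k :
  det3 (config s B i) (config s B j) (config s B k) =
  det_rows B ((s^-1)%g i) ((s^-1)%g j) ((s^-1)%g k).
Proof. exact: det_rows_relabel. Qed.

Lemma config1 B : config 1 B = line B.
Proof. by apply/funext => i; rewrite /config /line !mxE invg1 perm1. Qed.

Lemma det_rows_A1 (i j k : 'I_13) : (det_rows A1 i j k == 0) = concurrent i j k.
Proof. by rewrite det_rows_table intr_eq0 concurrentE. Qed.

Lemma det_rows_A2 (i j k : 'I_13) : (det_rows A2 i j k == 0) = concurrent i j k.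
Proof. by rewrite det_rows_table intr_eq0 A2_table_concurrent. Qed.

Lemma arrangement_A1 : is_arrangement A1.
Proof. exact: arrangement_table A1_table_arrangement. Qed.

Lemma arrangement_A2 : is_arrangement A2.
Proof. exact: arrangement_table A2_table_arrangement. Qed.

Lemma lattice_iso_A1_A2 : lattice_iso A1 A2.
Proof.
apply: lattice_iso_of_det_rows arrangement_A1 arrangement_A2 _ => i j k.
by rewrite det_rows_A1 det_rows_A2.
Qed.

Lemma realization_A1_A1 : realization A1 A1.
Proof.
split; first exact: arrangement_A1.
exact: lattice_iso_of_det_rows arrangement_A1 arrangement_A1 (fun _ _ _ => erefl).
Qed.

Lemma realization_A1_A2 : realization A1 A2.
Proof.
split; first exact: arrangement_A2.
apply: lattice_iso_of_det_rows arrangement_A2 arrangement_A1 _ => i j k.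
by rewrite det_rows_A1 det_rows_A2.
Qed.

Lemma realization_config B : realization A1 B -> exists s, realizes (config s B).
Proof.
move=> [hB [s hs]]; exists s => i j k.
by rewrite det3_config (lattice_iso_det_rows hB arrangement_A1 hs) det_rows_A1 !permKV.
Qed.

Lemma config_proj B B' s (p : {perm 'I_13}) (lam : 'I_13 -> C) (M : 'M[C]_3) :
  (forall i, row i B' = lam i *: (row (p i) B *m M)) ->
  let L i := lam (((p * s)^-1)%g i) in
  forall i j k, det3 (config (p * s) B' i) (config (p * s) B' j) (config (p * s) B' k) =
    L i * L j * L k * det_rows M i0 i1 i2 * det3 (config s B i) (config s B j) (config s B k).
Proof.
move=> hB' L i j k.
have pK x : p (((p * s)^-1)%g x) = (s^-1)%g x by rewrite invMg permM permKV.
by rewrite !det3_config (det_rows_proj hB') !pK.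
Qed.

Definition component (a b : C) : set (lines R 13) :=
  [set B | exists s, nondegenerate (config s B) /\ cr_comb a b (config s B) != 0].

Lemma component_proj a b B B' : proj_equiv B B' -> component a b B -> component a b B'.
Proof.
move=> [p [lam [M [hM [hlam hB']]]]] [s [hnd hcr]].
have hd := det_rows_unitmx hM.
have h := config_proj s hB'.
exists (p * s)%g; split; first exact: nondegenerate_scale (fun i => hlam _) hd h hnd.
by rewrite (cr_comb_scale _ _ h) !mulf_neq0 ?expf_neq0.
Qed.

Lemma config_unique B s s0 : realizes (config s0 B) -> nondegenerate (config s B) -> s = s0.
Proof.
move=> h0 h; have e : config s B = config s0 B \o (s^-1 * s0)%g.
  by apply/funext => i; rewrite /config /line /= !mxE permM permK.
rewrite e in h; have /eqP := realizes_rigid h0 h.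
by rewrite -eq_mulVg1 => /eqP.
Qed.

Lemma component_table (a b : int) (t : seq (seq int)) :
  (forall i j k : 'I_13, (det_table t i j k == 0) = concurrent i j k) ->
  let d := det_table t in a * (d 3 7 11 * d 3 2 9) + b * (d 3 11 9 * d 3 7 2) != 0 ->
  component a%:~R b%:~R (mx_of_table R 13 t).
Proof.
move=> ht d hab; exists 1%g; rewrite config1; split.
  by apply: realizes_nondegenerate => i j k; rewrite !line_table det3_map intr_eq0 ht.
by rewrite /cr_comb /cr_num /cr_den !line_table !det3_map -!rmorphM -rmorphD intr_eq0.
Qed.

Lemma component_A1 : component 2 1 A1.
Proof. exact: (@component_table 2 1 A1_table (fun i j k => esym (concurrentE i j k))). Qed.

Lemma component_A2 : component 5 (-3) A2.
Proof. exact: (@component_table 5 (-3) A2_table A2_table_concurrent). Qed.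

Lemma realization_component_cover B :
  realization A1 B -> component 5 (-3) B \/ component 2 1 B.
Proof.
move=> /realization_config [s hs].
have hnd := realizes_nondegenerate hs.
by case: (realizes_cover hs) => h; [left | right]; exists s.
Qed.

Lemma realization_component_disjoint B :
  realization A1 B -> component 5 (-3) B -> component 2 1 B -> False.
Proof.
move=> /realization_config [s0 hs0] [s [hnd h53]] [s' [hnd' h21]].
move: h53 h21; rewrite (config_unique hs0 hnd) (config_unique hs0 hnd') => h53 h21.
by move/eqP: (realizes_quadratic hs0); rewrite mulf_eq0 (negPf h53) (negPf h21).
Qed.

End Components.

Section Topology.
Variable R : realType.
Local Notation C := R[i].

Lemma continuous_entry n (i : 'I_n) (l : 'I_3) :
  continuous (fun B : lines R n => (B i l : C^o)).
Proof.
move=> B W /= HW.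
exists (fun i' l' => if (i' == i) && (l' == l) then W else setT).
  move=> i' l'; case: ifP => [/andP[/eqP -> /eqP ->]|_]; first exact: HW.
  exact: filterT.
by move=> B' /= /(_ i l); rewrite !eqxx.
Qed.

Section PolynomialMaps.
Variable T : topologicalType.
Implicit Types f g : T -> C^o.

Let continuous_add f g : continuous f -> continuous g -> continuous (fun x => f x + g x).
Proof. by move=> hf hg x; apply: continuousD; [exact: hf | exact: hg]. Qed.

Let continuous_sub f g : continuous f -> continuous g -> continuous (fun x => f x - g x).
Proof. by move=> hf hg x; apply: continuousB; [exact: hf | exact: hg]. Qed.

Let continuous_mul f g : continuous f -> continuous g -> continuous (fun x => f x * g x).
Proof. by move=> hf hg x; apply: continuousM; [exact: hf | exact: hg]. Qed.

Lemma continuous_det3 (f0 f1 f2 g0 g1 g2 h0 h1 h2 : T -> C^o) :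
  continuous f0 -> continuous f1 -> continuous f2 ->
  continuous g0 -> continuous g1 -> continuous g2 ->
  continuous h0 -> continuous h1 -> continuous h2 ->
  continuous (fun x => (det3 (f0 x, f1 x, f2 x) (g0 x, g1 x, g2 x) (h0 x, h1 x, h2 x) : C^o)).
Proof.
move=> a0 a1 a2 b0 b1 b2 c0 c1 c2; rewrite /det3.
have minor f g f' g' : continuous f -> continuous g -> continuous f' -> continuous g' ->
    continuous (fun x => f x * g x - f' x * g' x).
  by move=> *; apply: continuous_sub; exact: continuous_mul.
apply: continuous_add; first apply: continuous_sub.
- by apply: continuous_mul; last exact: minor.
- by apply: continuous_mul; last exact: minor.
- by apply: continuous_mul; last exact: minor.
Qed.

Lemma continuous_comb (a b : C) f1 f2 g1 g2 :
  continuous f1 -> continuous f2 -> continuous g1 -> continuous g2 ->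
  continuous (fun x => a * (f1 x * f2 x) + b * (g1 x * g2 x) : C^o).
Proof.
move=> hf1 hf2 hg1 hg2; apply: continuous_add.
- by apply: continuous_mul; [exact: cst_continuous | exact: continuous_mul].
- by apply: continuous_mul; [exact: cst_continuous | exact: continuous_mul].
Qed.

End PolynomialMaps.

Lemma continuous_det_rows n (i j k : 'I_n) :
  continuous (fun B : lines R n => (det_rows B i j k : C^o)).
Proof. by apply: continuous_det3; exact: continuous_entry. Qed.

Lemma continuous_det3_config s (i j k : 'I_13) :
  continuous (fun B : lines R 13 => (det3 (config s B i) (config s B j) (config s B k) : C^o)).
Proof.
have -> : (fun B : lines R 13 => det3 (config s B i) (config s B j) (config s B k)) =
    (fun B => det_rows B ((s^-1)%g i) ((s^-1)%g j) ((s^-1)%g k)).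
  by apply: funext => B; rewrite det3_config.
exact: continuous_det_rows.
Qed.

Lemma continuous_cr_comb (a b : C) s :
  continuous (fun B : lines R 13 => (cr_comb a b (config s B) : C^o)).
Proof. by apply: continuous_comb; exact: continuous_det3_config. Qed.

Lemma open_neq0 (T : topologicalType) (f : T -> C^o) :
  continuous f -> open [set x | f x != 0].
Proof.
move=> hf; apply: (@open_comp _ _ f [set z | z != 0]) => [z _|]; first exact: hf.
rewrite openE => z /= hz; apply/nbhs_ballP; exists `|z|; first by rewrite /= normr_gt0.
move=> y /=; rewrite /ball /=.
by apply: contraTneq => ->; rewrite subr0 Order.POrderTheory.ltxx.
Qed.

Lemma open_component (a b : C) : open (component a b).
Proof.
rewrite openE => B [s [hnd hcr]].
have near_neq0 (f : lines R 13 -> C^o) :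
    continuous f -> f B != 0 -> \forall B' \near B, f B' != 0.
  by move=> hf hB; have := open_neq0 hf; rewrite openE => /(_ B hB).
have hnd' : \forall B' \near B, forall t : 'I_13 * 'I_13 * 'I_13,
    ~~ concurrent t.1.1 t.1.2 t.2 ->
    det3 (config s B' t.1.1) (config s B' t.1.2) (config s B' t.2) != 0.
  apply: (@filter_forall _ _ _ _ (nbhs_filter B)) => -[[i j] k] /=.
  have [h|h] := boolP (concurrent i j k); first by apply: nearW => B' /negP.
  by move: (near_neq0 _ (@continuous_det3_config s i j k) (hnd i j k h)); apply: filterS.
apply: filterS2 hnd' (near_neq0 _ (@continuous_cr_comb a b s) hcr) => B' h1 h2.
by exists s; split => // i j k; exact: (h1 (i, j, k)).
Qed.

Lemma moduli_open_component (a b : C) :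
  moduli_open (arrA1 R) (realization (arrA1 R) `&` component a b).
Proof.
split; last by exists (component a b); split; [exact: open_component |].
split=> [B [] //|B B' _ hB' hBB' [_ hB]].
by split => //; exact: component_proj hBB' hB.
Qed.

End Topology.

Theorem theorem3p5 (R : realType) :
  is_rational_pair (arrA1 R) (arrA2 R).
Proof.
split; last by split; exact: defined_over_Q_table.
split; first exact: arrangement_A1.
split; first exact: arrangement_A2.
split; first exact: lattice_iso_A1_A2.
move=> [K [[[K_real _] K_conn] [KA1 KA2]]].
have cover : K `<=` (realization (arrA1 R) `&` component 2 1) `|`
                    (realization (arrA1 R) `&` component 5 (-3)).
  move=> B KB; have hB := K_real B KB.
  by case: (realization_component_cover hB) => h; [right | left].
have [B [[_ [hB h21]] [_ h53]]] :=
  K_conn _ _ (moduli_open_component 2 1) (moduli_open_component 5 (-3)) cover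
    (ex_intro _ _ (conj KA1 (conj (realization_A1_A1 R) (component_A1 R))))
    (ex_intro _ _ (conj KA2 (conj (realization_A1_A2 R) (component_A2 R)))).
exact: realization_component_disjoint hB h53 h21.
Qed.
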